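(* For discrete models over $K$ timesteps, assuming that $\theta^\star_{Tt}>0$ and $\theta^\star_{Ct}>0$ for all $t$, the solution $(\theta_{T}^\star, \theta_{C}^\star)$ is the only stationary point of the multi-player inverse-weighted Brier score game for times $t \in \{1,\ldots,K-1\}$. This game has $2(K-1)$ players: for each $t \in \{1,\ldots,K-1\}$, the $t$-th failure player controls only $\theta_{Tt}$ and minimizes $\ell_F^t(\theta)$, and the $t$-th censor player controls only $\theta_{Ct}$ and minimizes $\ell_G^t(\theta)$. Here $$\ell_{F}^t(\theta)=\mathbb{E}\Big[\frac{\overline{F}_{\theta_T}(t)^2\,\Delta\,\mathbb{1}\{U \leq t\}}{\overline{G}_{\theta_C}(U^{-})}+\frac{F_{\theta_T}(t)^2\,\mathbb{1}\{U > t\}}{\overline{G}_{\theta_C}(t)}\Big],$$ $$\ell_{G}^t(\theta)=\mathbb{E}\Big[\frac{\overline{G}_{\theta_C}(t)^2\,(1-\Delta)\,\mathbb{1}\{U \leq t\}}{\overline{F}_{\theta_T}(U)}+\frac{G_{\theta_C}(t)^2\,\mathbb{1}\{U > t\}}{\overline{F}_{\theta_T}(t)}\Big].$$ A stationary point is a $(\theta_T,\theta_C)$ at which $\partial \ell_F^t/\partial \theta_{Tt}=0$ and $\partial \ell_G^t/\partial \theta_{Ct}=0$ for all $t \in \{1,\ldots,K-1\}$.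
   Context: Let $T$ be a failure time and $C$ a censoring time, both taking values in discrete times $\{1,\ldots,K\}$, with $T$ independent of $C$ (marginal models, no covariates). One observes $U=\min(T,C)$ and $\Delta=\mathbb{1}\{T \leq C\}$; expectations are over the true data-generating distribution of $(T,C)$. The failure model has parameters $\theta_T=(\theta_{T1},\ldots,\theta_{T(K-1)})$ with $\theta_{Tt}=P_\theta(T=t)$, $\theta_{TK}=1-\sum_{t<K}\theta_{Tt}$, CDF $F_{\theta_T}(t)=\sum_{k=1}^t \theta_{Tk}$ and survival function $\overline{F}_{\theta_T}=1-F_{\theta_T}$; likewise the censoring model has $\theta_{Ct}=P_\theta(C=t)$, CDF $G_{\theta_C}$, $\overline{G}_{\theta_C}=1-G_{\theta_C}$, and $\overline{G}_{\theta_C}(t^-)=P_\theta(C\geq t)$. $\theta^\star_T,\theta^\star_C$ denote the parameters of the true failure and censoring distributions. The losses are inverse-probability-of-censoring-weighted Brier scores at time $t$ where the true weighting distribution is replaced by the other player's model. *)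

From Stdlib Require Import Reals.
From Coquelicot Require Import Coquelicot.
Open Scope R_scope.

Fixpoint sumR (f : nat -> R) (n : nat) : R :=
  match n with
  | O => 0
  | S m => sumR f m + f (S m)
  end.

(* A parameter vector th : nat -> R; only th 1, ..., th (K-1) are used.
   pmf K th k = P_theta(T = k) for k in {1..K}; the last mass is 1 - sum. *)
Definition pmf (K : nat) (th : nat -> R) (k : nat) : R :=
  if Nat.ltb k K then th k else 1 - sumR th (K - 1).

Definition cdf (K : nat) (th : nat -> R) (t : nat) : R :=
  sumR (pmf K th) t.

Definition surv (K : nat) (th : nat -> R) (t : nat) : R := 1 - cdf K th t.

(* left-limit survival Fbar(t^-) = P(T >= t) = 1 - F(t-1) *)
Definition survm (K : nat) (th : nat -> R) (t : nat) : R := 1 - cdf K th (t - 1).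

Definition ind (b : bool) : R := if b then 1 else 0.

(* Expectation of g(U, Delta) under the true independent (T, C) with
   parameters thTs, thCs; U = min T C, Delta = 1{T <= C}. *)
Definition Etrue (K : nat) (thTs thCs : nat -> R) (g : nat -> bool -> R) : R :=
  sumR (fun i => sumR (fun j =>
     pmf K thTs i * pmf K thCs j * g (Nat.min i j) (Nat.leb i j)) K) K.

Definition lossF (K : nat) (thTs thCs : nat -> R) (t : nat)
    (thT thC : nat -> R) : R :=
  Etrue K thTs thCs (fun u d =>
      (surv K thT t) ^ 2 * ind d * ind (Nat.leb u t) / survm K thC u
    + (cdf K thT t) ^ 2 * ind (Nat.ltb t u) / surv K thC t).

Definition lossG (K : nat) (thTs thCs : nat -> R) (t : nat)
    (thT thC : nat -> R) : R :=
  Etrue K thTs thCs (fun u d =>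
      (surv K thC t) ^ 2 * (1 - ind d) * ind (Nat.leb u t) / surv K thT u
    + (cdf K thC t) ^ 2 * ind (Nat.ltb t u) / surv K thT t).

Definition upd (th : nat -> R) (t : nat) (x : R) : nat -> R :=
  fun k => if Nat.eqb k t then x else th k.

(* valid model parameters: a probability distribution on {1..K} whose
   last mass is positive (so that all weights in the losses are positive) *)
Definition valid (K : nat) (th : nat -> R) : Prop :=
  (forall k, (1 <= k <= K - 1)%nat -> 0 <= th k) /\ 0 < pmf K th K.

Definition stationary (K : nat) (thTs thCs : nat -> R) (thT thC : nat -> R) : Prop :=
  forall t, (1 <= t <= K - 1)%nat ->
    is_derive (fun x => lossF K thTs thCs t (upd thT t x) thC) (thT t) 0 /\
    is_derive (fun x => lossG K thTs thCs t thT (upd thC t x)) (thC t) 0.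

(** The loss of the [t]-th failure player depends on its own parameter only through
    [F(t) = F_θT(t)], and is the quadratic [F̄(t)² E[Δ 1{U ≤ t}/Ḡ_θC(U⁻)] + F(t)² P(U > t)/Ḡ_θC(t)];
    symmetrically for the censoring player.  Independence gives
    [P(U > t) = F̄*(t) Ḡ*(t)] and [E[Δ 1{U ≤ t} w(U)] = Σ_{i ≤ t} f*(i) Ḡ*(i⁻) w(i)], so
    at the truth the weights cancel and both partial derivatives vanish.  Conversely, the
    [t]-th stationarity equations only involve the models on [{1, …, t}]; if these agree
    with the truth before [t], the two equations become a polynomial system in
    [(F̄_θT(t), Ḡ_θC(t))] whose only positive solution is [(F̄*(t), Ḡ*(t))].  Induction on
    [t] then identifies both models. *)

From Stdlib Require Import Reals Lra Lia Wf_nat.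
From Coquelicot Require Import Coquelicot.
(* Imported after [Reals] so that [Defs.ind] shadows [Rtopology.ind]. *)
From Pilot Require Import Defs.
Open Scope R_scope.

Lemma sumR_ext f g n :
  (forall k, (1 <= k <= n)%nat -> f k = g k) -> sumR f n = sumR g n.
Proof.
  induction n as [|n IH]; intros Hfg; cbn [sumR]; [reflexivity|].
  rewrite IH, Hfg; [reflexivity | lia | intros; apply Hfg; lia].
Qed.

Lemma sumR_plus f g n : sumR (fun k => f k + g k) n = sumR f n + sumR g n.
Proof. induction n as [|n IH]; cbn [sumR]; [lra|]. rewrite IH. ring. Qed.

Lemma sumR_scal c f n : sumR (fun k => c * f k) n = c * sumR f n.
Proof. induction n as [|n IH]; cbn [sumR]; [ring|]. rewrite IH. ring. Qed.

Lemma sumR_swap (h : nat -> nat -> R) n m :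
  sumR (fun i => sumR (fun j => h i j) m) n = sumR (fun j => sumR (fun i => h i j) n) m.
Proof.
  revert m; induction n as [|n IH]; intros m; cbn [sumR].
  - induction m as [|m IHm]; cbn [sumR]; [reflexivity|]. rewrite <- IHm. ring.
  - rewrite IH, <- sumR_plus. reflexivity.
Qed.

Lemma sumR_ind_le f t n :
  sumR (fun k => f k * ind (Nat.leb k t)) n = sumR f (Nat.min n t).
Proof.
  induction n as [|n IH]; cbn [sumR]; [reflexivity|]. rewrite IH.
  destruct (Nat.leb_spec (S n) t); cbn [ind].
  - rewrite Nat.min_l, (Nat.min_l (S n)) by lia. cbn [sumR]. ring.
  - rewrite Nat.min_r, (Nat.min_r (S n)) by lia. ring.
Qed.

Lemma sumR_ind_lt f t n :
  sumR (fun k => f k * ind (Nat.ltb t k)) n = sumR f n - sumR f (Nat.min n t).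
Proof.
  induction n as [|n IH]; [cbn; ring|]. cbn [sumR]. rewrite IH.
  destruct (Nat.ltb_spec t (S n)); cbn [ind].
  - rewrite Nat.min_r, (Nat.min_r (S n)) by lia. ring.
  - rewrite Nat.min_l, (Nat.min_l (S n)) by lia. cbn [sumR]. ring.
Qed.

Lemma sumR_nonneg f n :
  (forall k, (1 <= k <= n)%nat -> 0 <= f k) -> 0 <= sumR f n.
Proof.
  induction n as [|n IH]; intros Hf; cbn [sumR]; [lra|].
  assert (0 <= f (S n)) by (apply Hf; lia).
  assert (0 <= sumR f n) by (apply IH; intros; apply Hf; lia).
  lra.
Qed.

Lemma sumR_pos f n :
  (1 <= n)%nat -> (forall k, (1 <= k <= n)%nat -> 0 < f k) -> 0 < sumR f n.
Proof.
  destruct n as [|n]; intros Hn Hf; [lia|]. cbn [sumR].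
  assert (0 < f (S n)) by (apply Hf; lia).
  assert (0 <= sumR f n) by (apply sumR_nonneg; intros; left; apply Hf; lia).
  lra.
Qed.

Lemma pmf_lt K th k : (k < K)%nat -> pmf K th k = th k.
Proof. intros Hk. unfold pmf. apply Nat.ltb_lt in Hk. rewrite Hk. reflexivity. Qed.

Lemma cdf_pred K th t : (1 <= t)%nat -> cdf K th t = cdf K th (t - 1) + pmf K th t.
Proof. intros Ht. destruct t as [|t]; [lia|]. rewrite Nat.sub_succ, Nat.sub_0_r. reflexivity. Qed.

Lemma cdf_lt K th t : (t < K)%nat -> cdf K th t = sumR th t.
Proof. intros Ht. apply sumR_ext. intros k Hk. apply pmf_lt. lia. Qed.

Lemma cdf_K K th : (1 <= K)%nat -> cdf K th K = 1.
Proof.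
  intros HK. rewrite cdf_pred, cdf_lt by lia.
  unfold pmf. rewrite Nat.ltb_irrefl. ring.
Qed.

Lemma coord_as_cdf_diff K th t :
  (1 <= t < K)%nat -> th t = cdf K th t - cdf K th (t - 1).
Proof. intros Ht. rewrite (cdf_pred K th t), pmf_lt by lia. ring. Qed.

Lemma cdf_upd K th t x :
  (1 <= t < K)%nat -> cdf K (upd th t x) t = cdf K th (t - 1) + x.
Proof.
  intros Ht. rewrite cdf_pred, pmf_lt by lia.
  unfold upd at 2. rewrite Nat.eqb_refl. f_equal.
  apply sumR_ext. intros k Hk. rewrite !pmf_lt by lia.
  unfold upd. destruct (Nat.eqb_spec k t); [lia | reflexivity].
Qed.

Lemma sumR_pmf_gt K th s :
  (1 <= K)%nat -> (s <= K)%nat ->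
  sumR (fun k => pmf K th k * ind (Nat.ltb s k)) K = surv K th s.
Proof.
  intros HK Hs. rewrite sumR_ind_lt, Nat.min_r by lia.
  fold (cdf K th K) (cdf K th s). rewrite cdf_K by lia. reflexivity.
Qed.

Lemma valid_of_pmf_pos K th :
  (1 <= K)%nat -> (forall k, (1 <= k <= K)%nat -> 0 < pmf K th k) -> valid K th.
Proof.
  intros HK Hpos. split.
  - intros k Hk. rewrite <- (pmf_lt K th k) by lia. left. apply Hpos. lia.
  - apply Hpos. lia.
Qed.

Lemma surv_pos K th s : valid K th -> (s < K)%nat -> 0 < surv K th s.
Proof.
  intros [Hnn Hlast] Hs. destruct K as [|K]; [lia|].
  rewrite <- sumR_pmf_gt by lia. cbn [sumR].
  assert (Nat.ltb s (S K) = true) as -> by (apply Nat.ltb_lt; lia).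
  assert (0 <= sumR (fun k => pmf (S K) th k * ind (Nat.ltb s k)) K).
  { apply sumR_nonneg. intros k Hk. rewrite pmf_lt by lia.
    destruct (Nat.ltb s k); cbn [ind]; [|lra].
    assert (0 <= th k) by (apply Hnn; lia). lra. }
  cbn [ind]. lra.
Qed.

Definition prob_at_risk (K : nat) (thTs thCs : nat -> R) (t : nat) : R :=
  surv K thTs t * surv K thCs t.

Definition ipcw_event (K : nat) (thTs thCs thC : nat -> R) (t : nat) : R :=
  sumR (fun i => pmf K thTs i * survm K thCs i / survm K thC i) t.

Definition ipcw_censoring (K : nat) (thTs thCs thT : nat -> R) (t : nat) : R :=
  sumR (fun j => pmf K thCs j * surv K thTs j / surv K thT j) t.

Lemma Etrue_ext K thTs thCs g1 g2 :
  (forall u d, g1 u d = g2 u d) -> Etrue K thTs thCs g1 = Etrue K thTs thCs g2.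
Proof.
  intros Hg. unfold Etrue. apply sumR_ext. intros i _.
  apply sumR_ext. intros j _. rewrite Hg. reflexivity.
Qed.

Lemma Etrue_linear K thTs thCs c1 c2 g1 g2 :
  Etrue K thTs thCs (fun u d => c1 * g1 u d + c2 * g2 u d) =
  c1 * Etrue K thTs thCs g1 + c2 * Etrue K thTs thCs g2.
Proof.
  unfold Etrue. rewrite <- !sumR_scal, <- sumR_plus. apply sumR_ext. intros i _.
  rewrite <- !sumR_scal, <- sumR_plus. apply sumR_ext. intros j _. ring.
Qed.

Lemma Etrue_at_risk K thTs thCs t :
  (1 <= K)%nat -> (t <= K)%nat ->
  Etrue K thTs thCs (fun u _ => ind (Nat.ltb t u)) = prob_at_risk K thTs thCs t.
Proof.
  intros HK Ht. unfold Etrue, prob_at_risk.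
  rewrite <- (sumR_pmf_gt K thTs t), <- (sumR_pmf_gt K thCs t) by lia.
  rewrite Rmult_comm, <- sumR_scal. apply sumR_ext. intros i _.
  rewrite Rmult_comm, <- sumR_scal. apply sumR_ext. intros j _.
  destruct (Nat.ltb_spec t i), (Nat.ltb_spec t j), (Nat.ltb_spec t (Nat.min i j));
    cbn [ind]; try ring; lia.
Qed.

Lemma Etrue_event K thTs thCs w t :
  (1 <= K)%nat -> (t <= K)%nat ->
  Etrue K thTs thCs (fun u d => ind d * ind (Nat.leb u t) * w u) =
  sumR (fun i => pmf K thTs i * survm K thCs i * w i) t.
Proof.
  intros HK Ht. unfold Etrue.
  transitivity (sumR (fun i => pmf K thTs i * ind (Nat.leb i t) * w i *
    sumR (fun j => pmf K thCs j * ind (Nat.ltb (i - 1) j)) K) K).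
  { apply sumR_ext. intros i Hi. rewrite <- sumR_scal. apply sumR_ext. intros j Hj.
    destruct (Nat.leb_spec i j), (Nat.ltb_spec (i - 1) j); try lia.
    - rewrite Nat.min_l by lia. cbn [ind]. ring.
    - cbn [ind]. ring. }
  transitivity (sumR (fun i => pmf K thTs i * survm K thCs i * w i * ind (Nat.leb i t)) K).
  { apply sumR_ext. intros i Hi. rewrite sumR_pmf_gt by lia. unfold survm, surv. ring. }
  rewrite sumR_ind_le, Nat.min_r by lia. reflexivity.
Qed.

Lemma Etrue_censoring K thTs thCs w t :
  (1 <= K)%nat -> (t <= K)%nat ->
  Etrue K thTs thCs (fun u d => (1 - ind d) * ind (Nat.leb u t) * w u) =
  sumR (fun j => pmf K thCs j * surv K thTs j * w j) t.
Proof.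
  intros HK Ht. unfold Etrue. rewrite sumR_swap.
  transitivity (sumR (fun j => pmf K thCs j * ind (Nat.leb j t) * w j *
    sumR (fun i => pmf K thTs i * ind (Nat.ltb j i)) K) K).
  { apply sumR_ext. intros j Hj. rewrite <- sumR_scal. apply sumR_ext. intros i Hi.
    destruct (Nat.leb_spec i j), (Nat.ltb_spec j i); try lia.
    - cbn [ind]. ring.
    - rewrite Nat.min_r by lia. cbn [ind]. ring. }
  transitivity (sumR (fun j => pmf K thCs j * surv K thTs j * w j * ind (Nat.leb j t)) K).
  { apply sumR_ext. intros j Hj. rewrite sumR_pmf_gt by lia. ring. }
  rewrite sumR_ind_le, Nat.min_r by lia. reflexivity.
Qed.

Lemma lossF_closed_form K thTs thCs t thT thC :
  (1 <= K)%nat -> (t <= K)%nat ->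
  lossF K thTs thCs t thT thC =
  surv K thT t ^ 2 * ipcw_event K thTs thCs thC t
  + cdf K thT t ^ 2 * (prob_at_risk K thTs thCs t / surv K thC t).
Proof.
  intros HK Ht.
  transitivity (surv K thT t ^ 2
      * Etrue K thTs thCs (fun u d => ind d * ind (Nat.leb u t) * / survm K thC u)
    + (cdf K thT t ^ 2 / surv K thC t) * Etrue K thTs thCs (fun u _ => ind (Nat.ltb t u))).
  { rewrite <- Etrue_linear. apply Etrue_ext. intros u d. unfold Rdiv. ring. }
  rewrite Etrue_event, Etrue_at_risk by lia. unfold ipcw_event, Rdiv. ring.
Qed.

Lemma lossG_closed_form K thTs thCs t thT thC :
  (1 <= K)%nat -> (t <= K)%nat ->
  lossG K thTs thCs t thT thC =
  surv K thC t ^ 2 * ipcw_censoring K thTs thCs thT t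
  + cdf K thC t ^ 2 * (prob_at_risk K thTs thCs t / surv K thT t).
Proof.
  intros HK Ht.
  transitivity (surv K thC t ^ 2
      * Etrue K thTs thCs (fun u d => (1 - ind d) * ind (Nat.leb u t) * / surv K thT u)
    + (cdf K thC t ^ 2 / surv K thT t) * Etrue K thTs thCs (fun u _ => ind (Nat.ltb t u))).
  { rewrite <- Etrue_linear. apply Etrue_ext. intros u d. unfold Rdiv. ring. }
  rewrite Etrue_censoring, Etrue_at_risk by lia. unfold ipcw_censoring, Rdiv. ring.
Qed.

Lemma quadratic_is_derive s A B x0 :
  is_derive (fun x => (1 - (s + x)) ^ 2 * A + (s + x) ^ 2 * B) x0
    (2 * ((s + x0) * B - (1 - (s + x0)) * A)).
Proof. auto_derive; [exact I | ring]. Qed.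

Definition lossF_partial (K : nat) (thTs thCs : nat -> R) (t : nat) (thT thC : nat -> R) : R :=
  2 * (cdf K thT t * (prob_at_risk K thTs thCs t / surv K thC t)
       - surv K thT t * ipcw_event K thTs thCs thC t).

Definition lossG_partial (K : nat) (thTs thCs : nat -> R) (t : nat) (thT thC : nat -> R) : R :=
  2 * (cdf K thC t * (prob_at_risk K thTs thCs t / surv K thT t)
       - surv K thC t * ipcw_censoring K thTs thCs thT t).

Lemma lossF_partial_is_derive K thTs thCs t thT thC :
  (1 <= t < K)%nat ->
  is_derive (fun x => lossF K thTs thCs t (upd thT t x) thC) (thT t)
    (lossF_partial K thTs thCs t thT thC).
Proof.
  intros Ht. unfold lossF_partial. change (surv K thT t) with (1 - cdf K thT t).
  rewrite (cdf_pred K thT t), pmf_lt by lia.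
  eapply is_derive_ext; [|apply quadratic_is_derive]. intros x. cbv beta.
  rewrite lossF_closed_form by lia.
  change (surv K (upd thT t x) t) with (1 - cdf K (upd thT t x) t).
  rewrite cdf_upd by lia. reflexivity.
Qed.

Lemma lossG_partial_is_derive K thTs thCs t thT thC :
  (1 <= t < K)%nat ->
  is_derive (fun x => lossG K thTs thCs t thT (upd thC t x)) (thC t)
    (lossG_partial K thTs thCs t thT thC).
Proof.
  intros Ht. unfold lossG_partial. change (surv K thC t) with (1 - cdf K thC t).
  rewrite (cdf_pred K thC t), pmf_lt by lia.
  eapply is_derive_ext; [|apply quadratic_is_derive]. intros x. cbv beta.
  rewrite lossG_closed_form by lia.
  change (surv K (upd thC t x) t) with (1 - cdf K (upd thC t x) t).
  rewrite cdf_upd by lia. reflexivity.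
Qed.

Lemma stationary_iff_partials_eq0 K thTs thCs thT thC :
  stationary K thTs thCs thT thC <->
  (forall t, (1 <= t <= K - 1)%nat ->
     lossF_partial K thTs thCs t thT thC = 0 /\ lossG_partial K thTs thCs t thT thC = 0).
Proof.
  split; intros H t Ht; specialize (H t Ht) as [HF HG].
  - assert (DF := lossF_partial_is_derive K thTs thCs t thT thC ltac:(lia)).
    assert (DG := lossG_partial_is_derive K thTs thCs t thT thC ltac:(lia)).
    apply is_derive_unique in HF, HG, DF, DG.
    split; [rewrite <- DF | rewrite <- DG]; assumption.
  - split; [rewrite <- HF; apply lossF_partial_is_derive
            | rewrite <- HG; apply lossG_partial_is_derive]; lia.
Qed.

Lemma ipcw_system_unique p q P Q c g :
  0 < p -> 0 < q -> 0 < P < 1 -> 0 < Q -> 0 <= c -> 0 <= g -> c + g + Q = 1 ->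
  (1 - p) * (P * Q / q) = p * (1 - P) ->
  (1 - q) * (P * Q / p) = q * (c + g * P / p) ->
  p = P /\ q = Q.
Proof.
  intros Hp Hq HP HQ Hc Hg Hsum EF EG.
  assert (EF' : (1 - p) * P * Q - p * (1 - P) * q = 0).
  { replace ((1 - p) * P * Q - p * (1 - P) * q)
      with (q * ((1 - p) * (P * Q / q) - p * (1 - P))) by (field; lra).
    rewrite EF; ring. }
  assert (EG' : (1 - q) * P * Q - q * (c * p + g * P) = 0).
  { replace ((1 - q) * P * Q - q * (c * p + g * P))
      with (p * ((1 - q) * (P * Q / p) - q * (c + g * P / p))) by (field; lra).
    rewrite EG; ring. }
  (* eliminating q between the two equations leaves a factor p - P *)
  assert (Hfac : P * Q * (c * p + g + Q) * (p - P) = 0).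
  { replace c with (1 - g - Q) in * by lra.
    replace (P * Q * ((1 - g - Q) * p + g + Q) * (p - P))
      with (- ((1 - g - Q) * p + g * P + P * Q) * ((1 - p) * P * Q - p * (1 - P) * q)
            + p * (1 - P) * ((1 - q) * P * Q - q * ((1 - g - Q) * p + g * P))) by ring.
    rewrite EF', EG'; ring. }
  assert (HpP : p = P).
  { destruct (Rmult_integral _ _ Hfac) as [H | H]; [|lra].
    assert (0 < P * Q * (c * p + g + Q)) by (apply Rmult_lt_0_compat; nra).
    lra. }
  subst p. split; [reflexivity|].
  assert (Hq' : P * (1 - P) * (Q - q) = 0) by (rewrite <- EF'; ring).
  destruct (Rmult_integral _ _ Hq') as [H | H]; [|lra].
  assert (0 < P * (1 - P)) by nra. lra.
Qed.

Section TrueModels.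

Variables (K : nat) (thTs thCs : nat -> R).
Hypothesis HK : (1 <= K)%nat.
Hypothesis HpT : forall t, (1 <= t <= K)%nat -> 0 < pmf K thTs t.
Hypothesis HpC : forall t, (1 <= t <= K)%nat -> 0 < pmf K thCs t.

Lemma surv_true_pos s : (s < K)%nat -> 0 < surv K thTs s /\ 0 < surv K thCs s.
Proof. intros Hs. split; apply surv_pos; auto; apply valid_of_pmf_pos; assumption. Qed.

Lemma ipcw_event_agree thC t :
  (t <= K)%nat -> (forall s, (s < t)%nat -> cdf K thC s = cdf K thCs s) ->
  ipcw_event K thTs thCs thC t = cdf K thTs t.
Proof.
  intros Ht Hagree. apply sumR_ext. intros i Hi.
  unfold survm. rewrite Hagree by lia.
  destruct (surv_true_pos (i - 1)) as [_ Hpos]; [lia|]. unfold surv in Hpos.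
  field. lra.
Qed.

Lemma ipcw_censoring_agree thT t :
  (1 <= t <= K)%nat -> (forall s, (s < t)%nat -> cdf K thT s = cdf K thTs s) ->
  ipcw_censoring K thTs thCs thT t
  = cdf K thCs (t - 1) + pmf K thCs t * surv K thTs t / surv K thT t.
Proof.
  intros Ht Hagree. unfold ipcw_censoring.
  destruct t as [|t]; [lia|]. cbn [sumR]. rewrite Nat.sub_succ, Nat.sub_0_r.
  f_equal. apply sumR_ext. intros j Hj.
  unfold surv. rewrite Hagree by lia.
  destruct (surv_true_pos j) as [Hpos _]; [lia|]. unfold surv in Hpos.
  field. lra.
Qed.

Lemma truth_stationary : stationary K thTs thCs thTs thCs.
Proof.
  apply stationary_iff_partials_eq0. intros t Ht.
  destruct (surv_true_pos t) as [HsT HsC]; [lia|].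
  unfold lossF_partial, lossG_partial, prob_at_risk.
  rewrite ipcw_event_agree, ipcw_censoring_agree by (lia || (intros; reflexivity)).
  rewrite (cdf_pred K thCs t) by lia.
  split; field; lra.
Qed.

Section StationaryModels.

Variables thT thC : nat -> R.
Hypothesis validT : valid K thT.
Hypothesis validC : valid K thC.
Hypothesis Hstat : stationary K thTs thCs thT thC.

Lemma stationary_cdf_step t :
  (1 <= t <= K - 1)%nat ->
  (forall s, (s < t)%nat -> cdf K thT s = cdf K thTs s /\ cdf K thC s = cdf K thCs s) ->
  cdf K thT t = cdf K thTs t /\ cdf K thC t = cdf K thCs t.
Proof.
  intros Ht Hagree.
  destruct (proj1 (stationary_iff_partials_eq0 K thTs thCs thT thC) Hstat t Ht) as [EF EG].
  unfold lossF_partial, lossG_partial, prob_at_risk in EF, EG.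
  rewrite ipcw_event_agree in EF by (lia || (intros; apply Hagree; lia)).
  rewrite ipcw_censoring_agree in EG by (lia || (intros; apply Hagree; lia)).
  destruct (surv_true_pos t) as [HsTs HsCs]; [lia|].
  assert (HsT : 0 < surv K thT t) by (apply surv_pos; [assumption | lia]).
  assert (HsC : 0 < surv K thC t) by (apply surv_pos; [assumption | lia]).
  assert (HFs : 0 < cdf K thTs t) by (apply sumR_pos; [lia | intros; apply HpT; lia]).
  assert (Hc : 0 <= cdf K thCs (t - 1)) by (apply sumR_nonneg; intros; left; apply HpC; lia).
  assert (Hg : 0 < pmf K thCs t) by (apply HpC; lia).
  assert (Hsum : cdf K thCs (t - 1) + pmf K thCs t + surv K thCs t = 1)
    by (unfold surv; rewrite (cdf_pred K thCs t) by lia; ring).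
  destruct (ipcw_system_unique (surv K thT t) (surv K thC t) (surv K thTs t) (surv K thCs t)
              (cdf K thCs (t - 1)) (pmf K thCs t)) as [Hp Hq];
    unfold surv in *; lra.
Qed.

Lemma stationary_cdf_eq t :
  (t <= K - 1)%nat -> cdf K thT t = cdf K thTs t /\ cdf K thC t = cdf K thCs t.
Proof.
  induction t as [t IH] using lt_wf_ind. intros Ht.
  destruct t as [|t]; [split; reflexivity|].
  apply stationary_cdf_step; [lia|].
  intros s Hs. apply IH; lia.
Qed.

End StationaryModels.

End TrueModels.

Theorem proposition2 (K : nat) (thTs thCs : nat -> R) :
  (1 <= K)%nat ->
  (forall t, (1 <= t <= K)%nat -> 0 < pmf K thTs t) ->
  (forall t, (1 <= t <= K)%nat -> 0 < pmf K thCs t) ->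
  stationary K thTs thCs thTs thCs /\
  (forall thT thC : nat -> R,
     valid K thT -> valid K thC ->
     stationary K thTs thCs thT thC ->
     forall t, (1 <= t <= K - 1)%nat -> thT t = thTs t /\ thC t = thCs t).
Proof.
  intros HK HpT HpC. split; [apply truth_stationary; assumption|].
  intros thT thC validT validC Hstat t Ht.
  assert (Hcdf : forall s, (s <= K - 1)%nat ->
            cdf K thT s = cdf K thTs s /\ cdf K thC s = cdf K thCs s)
    by (intros; eapply stationary_cdf_eq; eassumption).
  destruct (Hcdf t) as [HT HC]; [lia|].
  destruct (Hcdf (t - 1)%nat) as [HT' HC']; [lia|].
  rewrite (coord_as_cdf_diff K thT t), (coord_as_cdf_diff K thTs t),
    (coord_as_cdf_diff K thC t), (coord_as_cdf_diff K thCs t) by lia.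
  rewrite HT, HT', HC, HC'. split; reflexivity.
Qed.
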